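(* Let $k\ge 0$ be an integer and let $G$ be a finite simple graph on $n\ge 1$ vertices with average degree $d(G)$. Then $\alpha_k(G) > \frac{k+1}{d(G)+2k+2}\, n$.
   Context: For a graph $G=(V,E)$ and an integer $k\ge 0$, a $k$-independent set is a set $S\subseteq V$ such that the induced subgraph $G[S]$ has maximum degree at most $k$; $\alpha_k(G)$ denotes the maximum cardinality of a $k$-independent set of $G$. The average degree is $d(G)=\frac{1}{n}\sum_{v\in V}\deg(v)=\frac{2|E|}{n}$. *)

From HB Require Import structures.
From mathcomp Require Import all_boot all_order all_algebra.
Set Implicit Arguments. Unset Strict Implicit. Unset Printing Implicit Defensive.

Definition simple_graph (T : finType) (e : rel T) : Prop :=
  symmetric e /\ irreflexive e.

Definition deg (T : finType) (e : rel T) (v : T) : nat := #|[set w | e v w]|.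

Definition k_independent (T : finType) (e : rel T) (k : nat) (S : {set T}) : bool :=
  [forall v in S, #|[set w in S | e v w]| <= k].

Definition alpha_k (T : finType) (e : rel T) (k : nat) : nat :=
  \max_(S : {set T} | k_independent e k S) #|S|.

Definition avg_deg (T : finType) (e : rel T) : rat :=
  ((\sum_(v : T) deg e v)%:R / #|T|%:R)%R.

From mathcomp Require Import all_boot all_order all_algebra.
From mathcomp Require Import zify ring lra.
Import Order.TTheory GRing.Theory Num.Theory.
Set Implicit Arguments. Unset Strict Implicit. Unset Printing Implicit Defensive.

(* Write deg_A(v) for the number of neighbours of v inside a vertex set A,
   and Q(A) = sum_{v in A} deg_A(v) = 2|E(G[A])|.  We prove, by strong
   induction on |A|, the integral statement: every nonempty A contains a
   k-independent S with  (k+1)|A|^2 < |S| (Q(A) + 2(k+1)|A|).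
   - If some v in A has |A| deg_A(v) >= Q(A) + (k+1)|A| (a vertex of large
     degree), apply induction to A \ {v}; an arithmetic inequality shows
     that the bound for A \ {v} implies the bound for A.
   - Otherwise take S minimising the potential Q(S) + (2k+1)|A \ S| among
     subsets of A.  Minimality makes S k-independent and gives every vertex
     of A \ S at least k+1 neighbours in S; double counting those edges
     against the degree hypothesis yields the bound.
   For A = V we have Q(V) = n d(G), and the bound rearranges over the
   rationals into the theorem. *)

Section LocalDegrees.
Variables (T : finType) (e : rel T).
Hypotheses (e_sym : symmetric e) (e_irr : irreflexive e).

Definition ldeg (A : {set T}) (v : T) : nat := \sum_(w in A) (e v w : nat).

Definition ldeg_sum (A : {set T}) : nat := \sum_(v in A) ldeg A v.

Lemma card_ldeg (A : {set T}) (v : T) : #|[set w in A | e v w]| = ldeg A v.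
Proof.
rewrite -sum1_card /ldeg big_mkcond [RHS]big_mkcond /=.
by apply: eq_bigr => w _; rewrite inE; case: (w \in A); case: (e v w).
Qed.

Lemma ldeg_le_card (A : {set T}) (v : T) : ldeg A v <= #|A|.
Proof. by rewrite -card_ldeg; apply/subset_leq_card/subsetP => w; rewrite inE => /andP[]. Qed.

Lemma ldeg_subset (A B : {set T}) (v : T) : A \subset B -> ldeg A v <= ldeg B v.
Proof. by move=> sAB; rewrite -!card_ldeg; apply/subset_leq_card; rewrite !setIdE setSI. Qed.

Lemma ldegU1 (A : {set T}) (x v : T) :
  x \notin A -> ldeg (x |: A) v = e v x + ldeg A v.
Proof. by move=> xA; rewrite /ldeg big_setU1. Qed.

Lemma ldegU1_self (A : {set T}) (x : T) : x \notin A -> ldeg (x |: A) x = ldeg A x.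
Proof. by move=> xA; rewrite ldegU1 // e_irr. Qed.

Lemma ldeg_sumU1 (A : {set T}) (x : T) :
  x \notin A -> ldeg_sum (x |: A) = ldeg_sum A + 2 * ldeg A x.
Proof.
move=> xA; rewrite /ldeg_sum big_setU1 //= ldegU1_self //.
under eq_bigr => v _ do rewrite ldegU1 //.
rewrite big_split /=.
have -> : \sum_(v in A) (e v x : nat) = ldeg A x.
  by apply: eq_bigr => v _; rewrite e_sym.
lia.
Qed.

Variable k : nat.

Lemma k_independent_ldeg (S : {set T}) :
  {in S, forall v, ldeg S v <= k} -> k_independent e k S.
Proof. by move=> Sk; apply/forall_inP => v vS; rewrite card_ldeg Sk. Qed.

(* The bound of the theorem for a subset S of a vertex set A, cleared of denominators. *)
Definition large_in (A S : {set T}) : bool :=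
  k.+1 * #|A| ^ 2 < #|S| * (ldeg_sum A + 2 * k.+1 * #|A|).

Lemma dominating_k_independent (A : {set T}) :
  exists S : {set T}, [/\ S \subset A, {in S, forall v, ldeg S v <= k}
                        & {in A :\: S, forall u, k < ldeg S u}].
Proof.
pose potential (S : {set T}) := ldeg_sum S + (2 * k + 1) * #|A :\: S|.
have [S sSA Smin] := @arg_minnP _ A (fun S : {set T} => S \subset A) potential (subxx _).
exists S; split=> // [v vS | u uAS].
- have vSv : v \notin S :\ v by rewrite setD11.
  have uAS : v \notin A :\: S by rewrite inE vS.
  have out_v : A :\: (S :\ v) = v |: (A :\: S).
    apply/setP => x; rewrite !inE; case: (eqVneq x v) => [->|] //=.
    by rewrite (subsetP sSA).
  have := Smin (S :\ v) (subset_trans (subsetDl _ _) sSA).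
  have degv : ldeg S v = ldeg (S :\ v) v by rewrite -{1}(setD1K vS) ldegU1_self.
  rewrite /potential out_v cardsU1 uAS -{1}(setD1K vS) ldeg_sumU1 // degv; lia.
- have [uS uA] : u \notin S /\ u \in A by move: uAS; rewrite inE => /andP[].
  have out_u : #|A :\: S| = (#|A :\: (u |: S)|).+1.
    rewrite (cardsD1 u) uAS add1n; congr _.+1; apply: eq_card => x.
    by rewrite !inE; case: (eqVneq x u).
  have := Smin (u |: S); rewrite subUset sub1set uA sSA => /(_ isT).
  rewrite /potential ldeg_sumU1 // out_u; lia.
Qed.

(* Double counting the edges between S and A \ S. *)
Lemma outside_edges (A S : {set T}) :
  {in A :\: S, forall u, k < ldeg S u} ->
  k.+1 * #|A :\: S| <= \sum_(v in S) ldeg A v.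
Proof.
move=> dom; apply: (@leq_trans (\sum_(u in A :\: S) ldeg S u)).
  by rewrite mulnC -sum_nat_const; apply: leq_sum => u /dom.
rewrite /ldeg exchange_big /=; apply: leq_sum => v _.
under eq_bigr => u _ do rewrite e_sym.
exact: ldeg_subset (subsetDl A S).
Qed.

Lemma low_degree_case (A : {set T}) :
  0 < #|A| -> {in A, forall v, #|A| * ldeg A v < ldeg_sum A + k.+1 * #|A|} ->
  exists S : {set T}, [/\ S \subset A, k_independent e k S & large_in A S].
Proof.
move=> A0 small.
have [S [sSA Sk dom]] := dominating_k_independent A.
have [v vS] : exists v, v \in S.
  have [u uA] := card_gt0P A0.
  apply/set0Pn; rewrite -card_gt0.
  case: (boolP (u \in S)) => [uS | uS]; first by apply/card_gt0P; exists u.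
  have /dom uS_deg : u \in A :\: S by rewrite inE uS.
  exact: leq_trans (leq_ltn_trans (leq0n k) uS_deg) (ldeg_le_card S u).
have degS : #|A| * \sum_(w in S) ldeg A w < #|S| * (ldeg_sum A + k.+1 * #|A|).
  rewrite big_distrr /= -sum_nat_const (bigD1 v) //= [X in _ < X](bigD1 v) //=.
  rewrite -addSn leq_add ?small ?(subsetP sSA) //.
  by apply: leq_sum => w /andP[wS _]; apply/ltnW/small/(subsetP sSA).
have cardA : #|S| + #|A :\: S| = #|A|.
  by rewrite -(cardsID S A) (setIidPr sSA).
exists S; split; rewrite ?k_independent_ldeg //.
have := leq_mul (leqnn #|A|) (outside_edges dom).
rewrite /large_in -cardA in degS *; nia.
Qed.

End LocalDegrees.

Lemma large_degree_step (k n d Q s : nat) :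
  Q + 2 * d + k.+1 * n.+1 <= n.+1 * d ->
  k.+1 * n ^ 2 < s * (Q + 2 * k.+1 * n) ->
  k.+1 * n.+1 ^ 2 < s * (Q + 2 * d + 2 * k.+1 * n.+1).
Proof.
move=> large IH.
have ratio : n.+1 ^ 2 * (Q + 2 * k.+1 * n) <= n ^ 2 * (Q + 2 * d + 2 * k.+1 * n.+1).
  nia.
have IH' : k.+1 * n ^ 2 * n.+1 ^ 2 < s * (Q + 2 * k.+1 * n) * n.+1 ^ 2.
  by rewrite ltn_pmul2r ?expn_gt0.
have := leq_mul (leqnn s) ratio; rewrite ltnNge; apply: contraL => le_bound.
have := leq_mul le_bound (leqnn (n ^ 2)); nia.
Qed.

Lemma large_k_independent_subset (T : finType) (e : rel T) (k : nat) (A : {set T}) :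
  symmetric e -> irreflexive e -> 0 < #|A| ->
  exists S : {set T}, [/\ S \subset A, k_independent e k S & large_in e k A S].
Proof.
move=> e_sym e_irr; have [N] := ubnP #|A|; elim: N A => // N IH A ltAN A0.
have [/exists_inP[v vA large] | /exists_inPn small] :=
  boolP [exists v in A, ldeg_sum e A + k.+1 * #|A| <= #|A| * ldeg e A v].
- have vAv : v \notin A :\ v by rewrite setD11.
  have cardA : #|A| = #|A :\ v|.+1 by rewrite (cardsD1 v) vA.
  have degv : ldeg e A v = ldeg e (A :\ v) v by rewrite -{1}(setD1K vA) ldegU1_self.
  move: large; rewrite -{1}(setD1K vA) ldeg_sumU1 // degv cardA => large.
  have Av0 : 0 < #|A :\ v|.
    apply: leq_trans (ldeg_le_card e _ v); move: large; nia.
  have [|S [sSAv Sk bound]] := IH (A :\ v) _ Av0; first by rewrite -ltnS -cardA.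
  exists S; split=> //; first exact: subset_trans sSAv (subsetDl _ _).
  rewrite /large_in -(setD1K vA) ldeg_sumU1 // cardsU1 vAv.
  exact: large_degree_step large bound.
- by apply: low_degree_case => // v /small; rewrite ltnNge.
Qed.

Lemma ldeg_sumT (T : finType) (e : rel T) :
  ldeg_sum e [set: T] = \sum_(v : T) deg e v.
Proof.
apply: eq_big => [v | v _]; first by rewrite in_setT.
by rewrite -card_ldeg /deg; apply: eq_card => w; rewrite !inE.
Qed.

Local Open Scope ring_scope.

Lemma large_bound_rat (R : realFieldType) (k n D s : nat) : (0 < n)%N ->
  (k.+1 * n ^ 2 < s * (D + 2 * k.+1 * n))%N ->
  k.+1%:R / (D%:R / n%:R + 2 * k%:R + 2) * n%:R < s%:R :> R.
Proof.
move=> n0 bound.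
have nR : 0 < n%:R :> R by rewrite ltr0n.
have DR : 0 < (D + 2 * k.+1 * n)%N%:R :> R by rewrite ltr0n addn_gt0 !muln_gt0 n0 orbT.
have avg : D%:R / n%:R + 2 * k%:R + 2 = (D + 2 * k.+1 * n)%N%:R / n%:R :> R.
  by rewrite natrD !natrM -addn1 natrD; field; rewrite gt_eqF.
have clear_denominators (N X : R) :
    0 < N -> 0 < X -> k.+1%:R / (X / N) * N = k.+1%:R * N ^+ 2 / X.
  by move=> N0 X0; field; rewrite !gt_eqF.
by rewrite avg clear_denominators // ltr_pdivrMr // -natrX -!natrM ltr_nat.
Qed.

Theorem mainTheorem2 (T : finType) (e : rel T) (k : nat) :
  simple_graph e -> (0 < #|T|)%N ->
  (k.+1)%:R / (avg_deg e + 2 * k%:R + 2) * #|T|%:R < (alpha_k e k)%:R :> rat.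
Proof.
move=> [e_sym e_irr] n0.
have [|S [_ Sk bound]] := large_k_independent_subset k e_sym e_irr (A := [set: T]).
  by rewrite cardsT.
have S_alpha : (#|S| <= alpha_k e k)%N by exact: (leq_bigmax_cond S Sk).
rewrite /large_in ldeg_sumT cardsT in bound.
apply: lt_le_trans (large_bound_rat _ n0 bound) _.
by rewrite ler_nat.
Qed.
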